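(* For every integer $n\ge 1$, the triangular stacked prism $Y_{3,n}$ is odd prime.
   Context: All graphs are finite and simple. A graph $G$ of order $N$ is odd prime if there is a bijection $\ell:V(G)\to\{1,3,\ldots,2N-1\}$ with $\gcd(\ell(u),\ell(v))=1$ for every edge $uv$. For $k\ge 3$, $n\ge 1$, the stacked prism $Y_{k,n}$ is the Cartesian product $C_k\,\square\,P_n$ of a $k$-cycle and a path on $n$ vertices: vertices $v_{i,j}$ ($1\le i\le n$, $1\le j\le k$), with edges $v_{i,j}v_{i,j+1}$ ($1\le j\le k-1$), $v_{i,k}v_{i,1}$ for each $i$, and $v_{i,j}v_{i+1,j}$ for $1\le i\le n-1$, $1\le j\le k$. *)

From mathcomp Require Import all_boot.
Set Implicit Arguments. Unset Strict Implicit. Unset Printing Implicit Defensive.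

Definition odd_label_set (N : nat) (m : nat) : bool := odd m && (m < 2 * N).

Definition odd_prime_labeling (V : finType) (adj : rel V) (l : V -> nat) : Prop :=
  [/\ injective l,
      (forall v, odd_label_set #|V| (l v)),
      (forall m, odd_label_set #|V| m -> exists v, l v = m)
    & (forall u v, adj u v -> coprime (l u) (l v))].

Definition odd_prime (V : finType) (adj : rel V) : Prop :=
  exists l : V -> nat, odd_prime_labeling adj l.

(* Stacked prism Y_{k,n} = C_k [] P_n.  Vertex v_{i,j} (1<=i<=n, 1<=j<=k)
   is represented by the pair (i-1, j-1) : 'I_n * 'I_k. *)
Definition prism_vertex (k n : nat) := ('I_n * 'I_k)%type.

Definition prism_adj (k n : nat) : rel (prism_vertex k n) :=
  fun x y =>
    (* cycle edges within a layer: v_{i,j} v_{i,j+1} and v_{i,k} v_{i,1} *)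
    ((x.1 == y.1) &&
       ((y.2 == (x.2.+1 %% k) :> nat) || (x.2 == (y.2.+1 %% k) :> nat)))
    ||
    ((x.2 == y.2) && ((y.1 == x.1.+1 :> nat) || (x.1 == y.1.+1 :> nat))).

From mathcomp Require Import all_boot.
From mathcomp Require Import zify.

(** Number the vertices of Y_{3,n} by 0, ..., 3n-1, layer i taking 3i, 3i+1, 3i+2 in the
    cyclic order shifted by i, and label vertex m by 2m+1.  Within a layer the numbers of
    adjacent vertices differ by 1 or 2, and along a rung by 1 or 4 thanks to the shift.
    Adjacent labels are thus odd numbers differing by a power of 2, hence coprime. *)

Lemma coprime_addn_pow2 x k : odd x -> coprime x (x + 2 ^ k).
Proof.
move=> ox; rewrite /coprime gcdnDl -/(coprime x (2 ^ k)).
by case: k => [|k]; rewrite ?coprimen1 // coprime_pexpr // coprimen2.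
Qed.

Lemma coprime_odd_pow2_gap a b k : a + 2 ^ k = b -> coprime a.*2.+1 b.*2.+1.
Proof.
move=> <-; rewrite doubleD -addSn -[(2 ^ k).*2]mul2n -expnS.
by apply: coprime_addn_pow2; rewrite /= odd_double.
Qed.

Lemma odd_prime_labeling_of_pow2_gaps (V : finType) (adj : rel V) (f : V -> nat) :
    injective f -> (forall v, f v < #|V|) ->
    (forall u v, adj u v -> exists k, f u + 2 ^ k = f v \/ f v + 2 ^ k = f u) ->
  odd_prime_labeling adj (fun v => (f v).*2.+1).
Proof.
move=> f_inj f_lt f_gap; split.
- by move=> u v /succn_inj /double_inj /f_inj.
- by move=> v; rewrite /odd_label_set /= odd_double mul2n ltn_Sdouble f_lt.
- move=> m /andP[m_odd m_lt].
  have m_half : m = m./2.*2.+1 by rewrite -[LHS]odd_double_half m_odd.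
  have half_lt : m./2 < #|V| by lia.
  pose g v : 'I_#|V| := Ordinal (f_lt v).
  have g_inj : injective g by move=> u v /(congr1 val) /f_inj.
  have /codomP[v gv] := inj_card_onto g_inj (eq_leq (card_ord _)) (Ordinal half_lt).
  by exists v; rewrite m_half -[f v]/(g v : nat) -gv.
- move=> u v /f_gap[k [gap | gap]]; first exact: coprime_odd_pow2_gap gap.
  by rewrite coprime_sym; apply: coprime_odd_pow2_gap gap.
Qed.

Definition prism3_index {n} (v : prism_vertex 3 n) : nat := 3 * v.1 + (v.1 + v.2) %% 3.

Lemma prism3_index_inj n : injective (@prism3_index n).
Proof.
move=> [i1 j1] [i2 j2]; rewrite /prism3_index /= => E.
have lt_j1 := ltn_ord j1; have lt_j2 := ltn_ord j2.
have [Ei Ej] : i1 = i2 :> nat /\ j1 = j2 :> nat by lia.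
by congr pair; apply: val_inj.
Qed.

Lemma prism3_index_lt n (v : prism_vertex 3 n) : prism3_index v < n * 3.
Proof.
by rewrite /prism3_index; have := ltn_ord v.1; have := ltn_ord v.2; lia.
Qed.

Lemma prism3_adj_index_gap n (x y : prism_vertex 3 n) : prism_adj x y ->
  exists k, prism3_index x + 2 ^ k = prism3_index y \/
            prism3_index y + 2 ^ k = prism3_index x.
Proof.
case: x y => [i1 j1] [i2 j2]; rewrite /prism_adj /prism3_index /=.
have lt_j1 := ltn_ord j1; have lt_j2 := ltn_ord j2.
set a := 3 * i1 + _; set b := 3 * i2 + _.
have gap_124 : (a + 1 = b \/ b + 1 = a) \/ (a + 2 = b \/ b + 2 = a) \/
               (a + 4 = b \/ b + 4 = a) -> exists k, a + 2 ^ k = b \/ b + 2 ^ k = a.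
  by case=> [|[|]]; [exists 0 | exists 1 | exists 2].
move=> adj; apply: gap_124; rewrite {}/a {}/b.
by case/orP: adj => /andP[/eqP/(congr1 val) /= E /orP[] /eqP F]; lia.
Qed.

Theorem theorem3p6 (n : nat) (hn : 1 <= n) :
  odd_prime (@prism_adj 3 n).
Proof.
exists (fun v => (prism3_index v).*2.+1).
apply: odd_prime_labeling_of_pow2_gaps.
- exact: prism3_index_inj.
- by move=> v; rewrite card_prod !card_ord prism3_index_lt.
- exact: prism3_adj_index_gap.
Qed.
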